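(* Let $(M,\Sigma)$ be a measurable space, $r\ge1$, and $\mu_1,\dots,\mu_r$ non-atomic countably additive finite measures on $\Sigma$. Let $S\in\Sigma$ with $\prod_{i=1}^r\mu_i(S)\neq0$. Then there exist pairwise disjoint measurable sets $R^1,\dots,R^r\subseteq S$ and a permutation $(l_1,\dots,l_r)$ of $\{1,\dots,r\}$ with $\mu_{l_k}(R^k)=\frac1r\mu_{l_k}(S)$ for each $k$ and $\mu_{l_j}(R^k)\le\frac1r\mu_{l_j}(S)$ for all $j>k$, together with a measurable subset $H\subseteq S$ such that $\mu_{l_1}(H)\ge 2^{-(r-1)}\mu_{l_1}(S)$ and $H$ has a gentleman's solution, i.e. a partition $H=F_1\sqcup\dots\sqcup F_r$ into measurable sets with $\mu_i(F_i)\le\mu_i(F_j)$ for all $i,j$.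
   Context: Partition elements may be empty. *)

From HB Require Import structures.
From mathcomp Require Import all_boot all_order all_algebra all_fingroup.
From mathcomp Require Import all_classical all_reals all_analysis.
Set Implicit Arguments. Unset Strict Implicit. Unset Printing Implicit Defensive.
Import Order.TTheory GRing.Theory Num.Theory.
Local Open Scope classical_set_scope.
Local Open Scope ereal_scope.

Definition is_atom d (T : measurableType d) (R : realType)
  (mu : set T -> \bar R) (A : set T) : Prop :=
  measurable A /\ 0 < mu A /\
  forall B, measurable B -> B `<=` A -> mu B = 0 \/ mu (A `\` B) = 0.

Definition non_atomic d (T : measurableType d) (R : realType)
  (mu : set T -> \bar R) : Prop := forall A, ~ is_atom mu A.

Definition gentleman_solution d (T : measurableType d) (R : realType) (r : nat)
  (mu : 'I_r -> set T -> \bar R) (H : set T) : Prop :=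
  exists F : 'I_r -> set T,
    (forall i, measurable (F i)) /\
    (forall i j, i != j -> F i `&` F j = set0) /\
    H = \bigcup_i F i /\
    (forall i j, mu i (F i) <= mu i (F j)).

(* The shares come from one analytic fact: for finitely many finite non-atomic
   measures, every measurable X contains a measurable Y on which each mu_i stays
   below a prescribed bound c_i, with equality for at least one i (provided some
   c_j <= mu_j(X)).  Enlarging admissible sets greedily, each step taking at least
   half of the largest possible gain, leads to an admissible A none of whose
   admissible extensions has positive mass; if all the bounds were strict on A,
   non-atomicity would provide such an extension of small positive mass.  Applied
   to what is left of S, with the bounds mu_i(S)/r for the measures not yet
   served, this yields R^1, ..., R^r and l.

   For H, cut S into N = r 2^(r-1) pieces of equal mu_(l_1)-measure.  Every other
   measure c reserves its 2^(r-1) heaviest pieces, and a pool M of 2^(r-1) pieces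
   remains.  The measures are then served one after the other; when p of them are
   still waiting, the level of c is the 2^p-th smallest c-measure of a pool piece,
   and the fewer than 2^p pool pieces below that level are topped up to it with
   parts of the reserve of c, which suffices because the reserve pieces outweigh
   the untouched pool pieces.  Every earlier level was attained on at least
   2^(p+1) pool pieces, so it survives on more than 2^p of them; in the end the
   measure served k-th from last keeps at least k pieces at its level, and a
   greedy system of distinct representatives gives every measure its own piece at
   its level, hence at least as heavy for it as every other chosen piece. *)

From HB Require Import structures.
From mathcomp Require Import all_boot all_order all_algebra all_fingroup.
From mathcomp Require Import all_classical all_reals all_analysis.
From mathcomp Require Import ring lra zify.
Import Order.TTheory GRing.Theory Num.Theory.

Local Open Scope classical_set_scope.
Local Open Scope ring_scope.

Lemma perm_enum_setD1 {I : finType} (P : {set I}) x : x \in P ->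
  perm_eq (x :: enum (P :\ x)) (enum P).
Proof.
move=> Px; apply: uniq_perm => [||y]; rewrite ?enum_uniq //.
  by rewrite /= mem_enum setD11 enum_uniq.
by rewrite in_cons !mem_enum in_setD1; case: eqVneq => // ->.
Qed.

Lemma greedy_representatives {I J : finType} (x0 : I) (y0 : J) (s : seq I)
    (A : I -> {set J}) (B : {set J}) : uniq s ->
  (forall k, (k < size s)%N -> (#|B| + k < #|A (nth x0 s k)|)%N) ->
  exists pick : I -> J,
    (forall x, x \in s -> pick x \in A x :\: B) /\ {in s &, injective pick}.
Proof.
elim: s B => [|x s IHs] B; first by exists (fun=> y0).
move=> /andP[xs us] cardA; have := cardA 0%N isT; rewrite addn0 /= => BAx.
have [y yAB] : exists y, y \in A x :\: B.
  apply/set0Pn; rewrite -card_gt0 cardsD.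
  have : (#|A x :&: B| <= #|B|)%N by rewrite subset_leq_card // subsetIr.
  lia.
have [|pick [pickA pick_inj]] := IHs (y |: B) us.
  move=> k ks; apply: leq_ltn_trans (cardA k.+1 ks); rewrite cardsU1 addnS.
  by case: (y \in B).
exists (fun z => if z == x then y else pick z); split.
  move=> z; rewrite in_cons; case: eqVneq => [->//|_ /= zs].
  by have := pickA z zs; rewrite !inE negb_or => /andP[/andP[_ ->] ->].
have pick_y z : z \in s -> pick z != y.
  by move=> zs; apply: contraTneq (pickA z zs) => ->; rewrite !inE eqxx.
move=> z w; rewrite !in_cons.
case: eqVneq => [->|zx] /= zs; case: eqVneq => [->|wx] //= ws.
- by move=> yw; have := pick_y w ws; rewrite yw eqxx.
- by move=> zy; have := pick_y z zs; rewrite zy eqxx.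
- exact: pick_inj.
Qed.

Section OrderSelection.
Context {disp : Order.disp_t} {T : orderType disp}.
Local Open Scope order_scope.

Lemma exists_top_subset {I : finType} (f : I -> T) (A : {set I}) n : (n <= #|A|)%N ->
  exists K : {set I}, [/\ K \subset A, #|K| = n &
    forall x y, x \in K -> y \in A :\: K -> f y <= f x].
Proof.
elim: n A => [|n IHn] A nA.
  by exists finset.set0; rewrite finset.sub0set cards0; split=> // x y; rewrite inE.
have [x0 Ax0] : exists x, x \in A by apply/set0Pn; rewrite -card_gt0 (leq_trans _ nA).
case: (arg_maxP f Ax0) => x; rewrite -/(x \in A) => Ax xmax.
have [|K [KA cardK Ktop]] := IHn (A :\ x); first by rewrite (cardsD1 x A) Ax in nA.
have xK : x \notin K by apply: contraTN Ax => /(fintype.subsetP KA); rewrite !inE eqxx.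
exists (x |: K); split.
- by rewrite finset.subUset finset.sub1set Ax (fintype.subset_trans KA) // subD1set.
- by rewrite cardsU1 xK cardK.
- move=> x' y; rewrite !inE negb_or => /orP[/eqP->|x'K] /andP[/andP[yx yK] Ay].
    exact: xmax.
  by apply: Ktop; rewrite // !inE yK yx.
Qed.

Lemma order_statistic {I : finType} (v : I -> T) (M : {set I}) t : (0 < t <= #|M|)%N ->
  exists2 j, j \in M & (t <= #|[set i in M | (v i <= v j)%O]|)%N &&
                      (#|[set i in M | (v i < v j)%O]| < t)%N.
Proof.
move=> /andP[t0 tM].
pose C := [set j in M | (t <= #|[set i in M | (v i <= v j)%O]|)%N].
have top_in_C (E : {set I}) : E \subset M -> (t <= #|E|)%N ->
    exists2 k, k \in C & k \in E.
  move=> EM tE; have [k0 Ek0] : exists k, k \in E.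
    by apply/set0Pn; rewrite -card_gt0 (leq_trans t0).
  case: (arg_maxP v Ek0) => k Ek kmax; exists k => //.
  rewrite inE (fintype.subsetP EM) //= (leq_trans tE) // subset_leq_card //.
  by apply/fintype.subsetP => i Ei; rewrite inE (fintype.subsetP EM) //=; exact: kmax.
have [j0 Cj0 _] := top_in_C M (subxx M) tM.
case: (arg_minP v Cj0) => j; rewrite -/(j \in C) inE => /andP[Mj tj] jmin.
exists j => //; rewrite tj /= ltnNge; apply/negP => tlt.
have [|k Ck] := top_in_C _ _ tlt.
  by apply/fintype.subsetP => i; rewrite inE => /andP[].
by rewrite inE => /andP[_]; rewrite ltNge jmin.
Qed.

Lemma disjoint_top_blocks {I J : finType} (f : I -> J -> T) n (cs : seq I)
    (Q : {set J}) : uniq cs -> (n * size cs + n <= #|Q|)%N ->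
  exists (M : {set J}) (K : I -> {set J}), [/\ (n <= #|M|)%N,
    forall c, c \in cs -> [/\ K c \subset Q :\: M, (n <= #|K c|)%N &
      forall q i, q \in K c -> i \in M -> f c i <= f c q],
    forall c c' q, c != c' -> q \in K c -> q \notin K c',
    forall c, c \notin cs -> K c = finset.set0 &
    M \subset Q].
Proof.
elim: cs Q => [|c cs IHcs] Q.
  move=> _; rewrite muln0 => nQ; exists Q, (fun=> finset.set0).
  by split=> // c c' q _; rewrite inE.
move=> /andP[ccs ucs]; rewrite /= mulnS => nQ.
have [|Kc [KcQ cardKc Kctop]] := exists_top_subset (f c) Q n.
  by move: nQ; lia.
have [|M [K [nM KM Kdisj K0 MQ]]] := IHcs (Q :\: Kc) ucs.
  by rewrite cardsD (finset.setIidPr KcQ) cardKc; move: nQ; lia.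
have notKc c' q : c' != c -> q \in K c' -> q \notin Kc.
  move=> c'c; case: (boolP (c' \in cs)) => c'cs; last by rewrite K0 // inE.
  have [KQ _ _] := KM c' c'cs.
  by move=> /(fintype.subsetP KQ); rewrite !inE => /andP[_ /andP[]].
exists M, (fun x => if x == c then Kc else K x); split=> //.
- move=> x; rewrite in_cons; case: (eqVneq x c) => [->|xc] /= xcs.
    split; last by move=> q i Kq Mi; apply: Kctop; rewrite // (fintype.subsetP MQ).
      apply/fintype.subsetP => q Kq; rewrite !inE (fintype.subsetP KcQ) // andbT.
      by apply: contraL Kq => /(fintype.subsetP MQ); rewrite inE => /andP[].
    by rewrite cardKc.
  have [KQ nK Ktop] := KM x xcs; split=> //.
  apply: fintype.subset_trans KQ _; apply: finset.setSD; exact: subsetDl.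
- move=> x x' q; case: (eqVneq x c) => [->|xc]; case: (eqVneq x' c) => [x'c|x'c] //= xx'.
  + by move=> Kq; apply: contraL Kq; exact: notKc.
  + exact: notKc.
  + exact: Kdisj.
- by move=> x; rewrite in_cons negb_or => /andP[/negbTE-> /K0].
- exact: fintype.subset_trans MQ (subsetDl _ _).
Qed.

End OrderSelection.

Lemma bigcup_fin_bigsetU {U : Type} {I : finType} (F : I -> set U) :
  \bigcup_i F i = \big[setU/set0]_i F i.
Proof.
by rewrite -bigcup_seq; apply: eq_bigcupl; split=> x //= _; rewrite mem_index_enum.
Qed.

Section RealValuedMeasure.
Local Set Implicit Arguments.
Local Unset Strict Implicit.
Context {d : measure_display} {T : measurableType d} {R : realType}.
Variable mu : {finite_measure set T -> \bar R}.

Definition measr (A : set T) : R := fine (mu A).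

Lemma measrE A : measurable A -> mu A = (measr A)%:E.
Proof. by move=> mA; rewrite /measr fineK //; exact: fin_num_measure. Qed.

Lemma measr_ge0 A : measurable A -> 0 <= measr A.
Proof. by move=> mA; rewrite -lee_fin -measrE //; exact: measure_ge0. Qed.

Lemma measr0 : measr set0 = 0.
Proof. by rewrite /measr measure0. Qed.

Lemma measrU A B : measurable A -> measurable B -> A `&` B = set0 ->
  measr (A `|` B) = measr A + measr B.
Proof.
move=> mA mB AB; apply/EFin_inj; rewrite EFinD -!measrE //; last exact: measurableU.
exact: measureU.
Qed.

Lemma le_measr A B : measurable A -> measurable B -> A `<=` B -> measr A <= measr B.
Proof.
by move=> mA mB AB; rewrite -lee_fin -!measrE //; apply: le_measure; rewrite ?inE.
Qed.

Lemma measrD A B : measurable A -> measurable B -> B `<=` A ->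
  measr (A `\` B) = measr A - measr B.
Proof.
move=> mA mB BA; apply/eqP; rewrite eq_sym subr_eq -measrU //.
- by rewrite setUC setDUK.
- exact: measurableD.
- by apply/seteqP; split=> x // [[]].
Qed.

Lemma measr_bigsetU (I : eqType) (s : seq I) (P : pred I) (F : I -> set T) :
  uniq s -> (forall i, measurable (F i)) ->
  (forall i j, i != j -> F i `&` F j = set0) ->
  measr (\big[setU/set0]_(i <- s | P i) F i) = \sum_(i <- s | P i) measr (F i).
Proof.
move=> + mF dF; elim: s => [|i s IHs]; first by rewrite !big_nil measr0.
rewrite /= => /andP[i_notin_s us]; rewrite !big_cons -IHs //; case: ifP => // _.
apply: measrU => //; first exact: bigsetU_measurable.
rewrite big_distrr /= big1_seq // => j /andP[_ js]; apply: dF.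
by apply: contraNneq i_notin_s => ->.
Qed.

Lemma nonatomic_split : non_atomic mu -> forall A, measurable A -> 0 < measr A ->
  exists B, [/\ measurable B, B `<=` A, 0 < measr B & 0 < measr (A `\` B)].
Proof.
move=> hna A mA A0; apply: contrapT => noB; apply: (hna A).
split=> //; split=> [|B mB BA]; first by rewrite measrE.
have mAB := measurableD mA mB.
have [B0|] := ltrP 0 (measr B); last first.
  by rewrite le_eqVlt ltNge measr_ge0 // orbF (measrE mB) => /eqP->; left.
have [AB0|] := ltrP 0 (measr (A `\` B)); first by case: noB; exists B.
by rewrite le_eqVlt ltNge measr_ge0 // orbF (measrE mAB) => /eqP->; right.
Qed.

End RealValuedMeasure.

Section MeasureFamily.
Context {d : measure_display} {T : measurableType d} {R : realType} {I : finType}.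
Variable mu : I -> {finite_measure set T -> \bar R}.
Hypothesis mu_nonatomic : forall i, non_atomic (mu i).
Local Set Implicit Arguments.
Local Unset Strict Implicit.

Local Notation m i := (measr (mu i)).

Definition msumr (P : {pred I}) (A : set T) : R := \sum_(i | P i) m i A.

Section Sum.
Variable P : {pred I}.

Lemma msumr_ge0 A : measurable A -> 0 <= msumr P A.
Proof. by move=> mA; apply: sumr_ge0 => i _; exact: measr_ge0. Qed.

Lemma msumr0 : msumr P set0 = 0.
Proof. by apply: big1 => i _; exact: measr0. Qed.

Lemma msumrU A B : measurable A -> measurable B -> A `&` B = set0 ->
  msumr P (A `|` B) = msumr P A + msumr P B.
Proof. by move=> mA mB AB; rewrite -big_split; apply: eq_bigr => i _; exact: measrU. Qed.

Lemma le_msumr A B : measurable A -> measurable B -> A `<=` B ->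
  msumr P A <= msumr P B.
Proof. by move=> mA mB AB; apply: ler_sum => i _; exact: le_measr. Qed.

Lemma measr_le_msumr i A : measurable A -> P i -> m i A <= msumr P A.
Proof.
move=> mA Pi; rewrite /msumr (bigD1 i) //= lerDl.
by apply: sumr_ge0 => j _; exact: measr_ge0.
Qed.

Lemma msumr_halve Y : measurable Y -> 0 < msumr P Y ->
  exists Z, [/\ measurable Z, Z `<=` Y, 0 < msumr P Z & msumr P Z <= msumr P Y / 2].
Proof.
move=> mY Y0; have [i Pi Yi0] : exists2 i, P i & 0 < m i Y.
  apply: contrapT => noi; move: Y0; rewrite ltNge => /negP; apply.
  by apply: sumr_le0 => i Pi; rewrite leNgt; apply/negP => Yi0; apply: noi; exists i.
have [B [mB BY B0 YB0]] := nonatomic_split (mu_nonatomic i) mY Yi0.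
have mYB := measurableD mY mB.
have sumY : msumr P Y = msumr P B + msumr P (Y `\` B).
  rewrite -msumrU ?(setDUK BY) //.
  by apply/seteqP; split=> x // [? []].
have [BY2|] := lerP (msumr P B) (msumr P Y / 2).
  by exists B; split=> //; exact: lt_le_trans B0 (measr_le_msumr mB Pi).
exists (Y `\` B); split=> //.
  exact: lt_le_trans YB0 (measr_le_msumr mYB Pi).
lra.
Qed.

Lemma msumr_small Y eps : measurable Y -> 0 < msumr P Y -> 0 < eps ->
  exists Z, [/\ measurable Z, Z `<=` Y, 0 < msumr P Z & msumr P Z <= eps].
Proof.
move=> mY Y0 eps0.
have halves k : exists Z, [/\ measurable Z, Z `<=` Y, 0 < msumr P Z &
    msumr P Z * 2 ^+ k <= msumr P Y].
  elim: k => [|k [Z [mZ ZY Z0 Zk]]]; first by exists Y; rewrite expr0 mulr1; split.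
  have [W [mW WZ W0 WZ2]] := msumr_halve mZ Z0.
  exists W; split=> //; first exact: subset_trans WZ ZY.
  apply: le_trans Zk; rewrite exprS mulrA ler_pM2r ?exprn_gt0 //; lra.
pose k := Num.Def.archi_bound (eps^-1 * msumr P Y).
have [Z [mZ ZY Z0 Zk]] := halves k.
exists Z; split=> //; rewrite -(ler_pM2r (exprn_gt0 k (ltr0Sn _ 1))).
apply: le_trans Zk _; rewrite -ler_pdivrMl //; apply/ltW.
apply: lt_le_trans (archi_boundP _) _.
  by rewrite mulr_ge0 ?invr_ge0 ?msumr_ge0 ?ltW.
by have := ltn_expl k (ltnSn 1); rewrite -(ltr_nat R) natrX => /ltW.
Qed.

Section Exhaustion.
Variables (c : I -> R) (X : set T).
Hypotheses (mX : measurable X) (c_ge0 : forall i, P i -> 0 <= c i).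

Definition admissible A :=
  [/\ measurable A, A `<=` X & forall i, P i -> m i A <= c i].

Lemma admissible0 : admissible set0.
Proof. by split=> // i Pi; rewrite measr0 c_ge0. Qed.

Lemma admissible_sub A B : admissible A -> measurable B -> B `<=` A -> admissible B.
Proof.
case=> mA AX Ac mB BA; split=> [//||i Pi]; first exact: subset_trans BA AX.
exact: le_trans (le_measr _ mB mA BA) (Ac i Pi).
Qed.

Lemma admissible_bigcup (F : nat -> set T) :
  {homo F : n k / (n <= k)%N >-> (n <= k)%O} -> (forall n, admissible (F n)) ->
  admissible (\bigcup_n F n).
Proof.
move=> homoF admF; have mF n : measurable (F n) by case: (admF n).
have mUF : measurable (\bigcup_n F n) by exact: bigcupT_measurable.
split=> [//|x [n _ Fnx]|i Pi]; first by case: (admF n) => _ /(_ x Fnx).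
rewrite -lee_fin -measrE //.
have cvgF := nondecreasing_cvg_mu (mu := mu i) mF mUF homoF.
rewrite -(cvg_lim _ cvgF) //; apply: lime_le; first exact: cvgP cvgF.
by apply: nearW => n /=; rewrite measrE // lee_fin; case: (admF n) => _ _ /(_ i Pi).
Qed.

Definition extensions A :=
  [set Z | [/\ measurable Z, Z `<=` X `\` A & admissible (A `|` Z)]].

Lemma greedy_extension : exists f : set T -> set T, forall A, admissible A ->
  extensions A (f A) /\
  forall Z, extensions A Z -> msumr P Z <= 2 * msumr P (f A).
Proof.
suff /choice[f hf] : forall A, exists Z, admissible A -> extensions A Z /\
    forall Z', extensions A Z' -> msumr P Z' <= 2 * msumr P Z by exists f.
move=> A; have [admA|] := pselect (admissible A); last by exists set0.
pose gain := [set msumr P Z | Z in extensions A].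
have ext0 : extensions A set0 by split=> //; rewrite setU0.
have sup_gain : has_sup gain.
  split; first by exists 0, set0; rewrite ?msumr0.
  exists (msumr P X) => _ [Z [mZ ZXA _] <-].
  by apply: le_msumr => // x /ZXA[].
have gain_le Z : extensions A Z -> msumr P Z <= sup gain.
  by move=> AZ; apply: sup_upper_bound => //; exists Z.
have [sup_le0|sup_gt0] := lerP (sup gain) 0.
  exists set0 => _; split=> // Z /gain_le Zsup.
  by rewrite msumr0 mulr0; exact: le_trans Zsup sup_le0.
have [_ [Z AZ <-] supZ] := sup_adherent (divr_gt0 sup_gt0 (ltr0Sn _ 1)) sup_gain.
exists Z => _; split=> // Z' /gain_le; lra.
Qed.

Lemma admissible_exhaustion : exists A, admissible A /\
  forall Z, extensions A Z -> msumr P Z = 0.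
Proof.
have [f hf] := greedy_extension.
pose F n := iter n (fun A => A `|` f A) set0.
have admF n : admissible (F n).
  by elim: n => [|n IHn]; [exact: admissible0 | case: (hf _ IHn) => -[]].
have mF n : measurable (F n) by case: (admF n).
have homoF : {homo F : n k / (n <= k)%N >-> (n <= k)%O}.
  apply: homo_leq => [A|B A C|n]; [exact: lexx | exact: le_trans |].
  by apply/subsetPset => x; left.
exists (\bigcup_n F n); split=> [|Z [mZ ZXA admZ]]; first exact: admissible_bigcup.
apply/eqP; rewrite eq_le msumr_ge0 // andbT leNgt; apply/negP => Z0.
(* [Z] stays available at every step, so each step gains at least half its mass. *)
have gain n : msumr P Z <= 2 * msumr P (f (F n)).
  apply: (hf _ (admF n)).2; split=> //.
    by move=> x /ZXA[Xx nFx]; split=> // Fx; apply: nFx; exists n.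
  apply: (admissible_sub admZ (measurableU _ _ (mF n) mZ)).
  by apply: setSU => x Fx; exists n.
have grow n : n%:R * msumr P Z <= 2 * msumr P (F n).
  elim: n => [|n IHn]; first by rewrite mul0r /F /= msumr0 mulr0.
  have [[mf fXF _] _] := hf _ (admF n).
  rewrite /F iterS -/(F n) msumrU //; last first.
    by apply/seteqP; split=> x // [Fx /fXF[]].
  by rewrite -addn1 natrD mulrDl mul1r; have := gain n; lra.
have bounded n : msumr P (F n) <= msumr P X.
  by apply: le_msumr => //; case: (admF n).
pose n := Num.Def.archi_bound (2 * msumr P X / msumr P Z).
have := archi_boundP (divr_ge0 (mulr_ge0 (ler0n _ 2) (msumr_ge0 mX)) (ltW Z0)).
rewrite ltr_pdivrMr // => ltn; have := grow n; have := bounded n; lra.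
Qed.

Lemma nonatomic_tight_subset : (exists2 j, P j & c j <= m j X) ->
  exists Y, [/\ measurable Y, Y `<=` X, forall i, P i -> m i Y <= c i &
    exists2 j, P j & m j Y = c j].
Proof.
move=> [j Pj cjX]; have [A [[mA AX Ac] maxA]] := admissible_exhaustion.
exists A; split=> //; apply: contrapT => no_tight.
have ltA i : P i -> m i A < c i.
  move=> Pi; rewrite lt_neqAle Ac // andbT.
  by apply/eqP => Aci; apply: no_tight; exists i.
pose e := \big[Num.min/1]_(i | P i) (c i - m i A).
have e0 : 0 < e by apply: lt_bigmin => // i /ltA; rewrite subr_gt0.
have mXA := measurableD mX mA.
have [XA0|] := ltrP 0 (msumr P (X `\` A)).
  have [Z [mZ ZXA Z0 Ze]] := msumr_small mXA XA0 e0.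
  have AZ : A `&` Z = set0 by apply/seteqP; split=> x // [Ax /ZXA[]].
  suff : msumr P Z = 0 by move/eqP; rewrite gt_eqF.
  apply: maxA; split=> //; split; first exact: measurableU.
    by move=> x [/AX|/ZXA[]].
  move=> i Pi; rewrite measrU //.
  have : m i Z <= c i - m i A.
    apply: le_trans (measr_le_msumr mZ Pi) (le_trans Ze _).
    exact: bigmin_le_cond.
  lra.
move=> XA0; have := le_trans (measr_le_msumr mXA Pj) XA0.
rewrite measrD //; have := ltA j Pj; lra.
Qed.

End Exhaustion.

End Sum.

Lemma sierpinski i X v : measurable X -> 0 <= v <= m i X ->
  exists Y, [/\ measurable Y, Y `<=` X & m i Y = v].
Proof.
move=> mX /andP[v0 vX].
have [|Y [mY YX _ [j /eqP-> Yj]]] :=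
  nonatomic_tight_subset (P := pred1 i) (c := fun=> v) mX (fun _ _ => v0); first by exists i; rewrite /= ?eqxx.
by exists Y.
Qed.

Lemma nonatomic_carve i X (J : finType) (A : {set J}) (w : J -> R) :
  measurable X -> (forall k, k \in A -> 0 <= w k) -> \sum_(k in A) w k <= m i X ->
  exists D : J -> set T, [/\ forall k, measurable (D k) /\ D k `<=` X,
    forall k l, k != l -> D k `&` D l = set0,
    forall k, k \in A -> m i (D k) = w k &
    forall k, k \notin A -> D k = set0].
Proof.
have [n] := ubnP #|A|; elim: n A X => // n IHn A X /ltnSE cardA mX w0.
have [->|[x xA]] := set_0Vmem A.
  move=> _; exists (fun=> set0); split=> // [k|k l _|k]; last by rewrite inE.
  - by split.
  - by rewrite set0I.
rewrite (big_setD1 x xA) /= => sumA.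
have sum0 : 0 <= \sum_(k in A :\ x) w k.
  by apply: sumr_ge0 => k; rewrite in_setD1 => /andP[_ /w0].
have [Y [mY YX mYx]] : exists Y, [/\ measurable Y, Y `<=` X & m i Y = w x].
  by apply: sierpinski => //; rewrite w0 //=; lra.
have [||||D [DXY dD Dw D0]] := IHn (A :\ x) (X `\` Y).
- by move: cardA; rewrite (cardsD1 x A) xA.
- exact: measurableD.
- by move=> k; rewrite in_setD1 => /andP[_ /w0].
- by rewrite measrD // mYx; lra.
have YD k : Y `&` D k = set0.
  by apply/seteqP; split=> z // [Yz /(DXY k).2[]].
exists (fun k => if k == x then Y else D k); split.
- move=> k; case: eqP => _; first by [].
  by have [mD DX] := DXY k; split=> // z /DX[].
- move=> k l; case: (eqVneq k x) => [->|kx]; case: (eqVneq l x) => [lx|lx] //= kl;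
    by [rewrite YD | rewrite setIC YD | exact: dD].
- move=> k kA; case: eqP => [->//|/eqP kx].
  by apply: Dw; rewrite !inE kx.
- move=> k kA; case: eqP => [kx|_]; first by move: kA; rewrite kx xA.
  by apply: D0; rewrite !inE negb_and kA orbT.
Qed.

Lemma sequential_shares (x0 : I) (P : {set I}) (c : I -> R) (L : set T) :
  measurable L -> (forall i, 0 <= c i) ->
  (forall i, i \in P -> #|P|%:R * c i <= m i L) ->
  exists (s : seq I) (Rs : nat -> set T), [/\ perm_eq s (enum P),
    forall j, measurable (Rs j) /\ Rs j `<=` L,
    forall j j', j != j' -> Rs j `&` Rs j' = set0,
    forall j, (j < #|P|)%N -> m (nth x0 s j) (Rs j) = c (nth x0 s j) &
    forall j j', (j < j' < #|P|)%N -> m (nth x0 s j') (Rs j) <= c (nth x0 s j')].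
Proof.
move=> + c0; have [n] := ubnP #|P|; elim: n P L => // n IHn P L /ltnSE cardP mL hP.
have [P0|[x Px]] := set_0Vmem P.
  exists [::], (fun=> set0); rewrite P0 cards0 enum_set0.
  by split=> // [j|j j' _|j j']; [split | exact: set0I | rewrite ltn0 andbF].
have [|Y [mY YL Yc [t Pt Yt]]] := nonatomic_tight_subset (P := mem P) (c := c) mL
  (fun i _ => c0 i).
  exists x => //; apply: le_trans (hP x Px); rewrite ler_peMl // ler1n card_gt0.
  by apply/set0Pn; exists x.
have {}Pt : t \in P := Pt.
have cardPt : #|P| = #|P :\ t|.+1 by rewrite (cardsD1 t P) Pt.
have [|||s [Rs [sP mRs dRs Rst Rsle]]] := IHn (P :\ t) (L `\` Y).
- by rewrite -ltnS -cardPt.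
- exact: measurableD.
- move=> i; rewrite in_setD1 => /andP[it Pi]; rewrite measrD //.
  by have := hP i Pi; have := Yc i Pi; rewrite cardPt -addn1 natrD; lra.
have s_in j : (j < #|P :\ t|)%N -> nth x0 s j \in P.
  move=> jP; have : nth x0 s j \in s by rewrite mem_nth // (perm_size sP) -cardE.
  by rewrite (perm_mem sP) mem_enum in_setD1 => /andP[].
exists (t :: s), (fun j => if j is j'.+1 then Rs j' else Y); split.
- by rewrite -(perm_cons t) in sP; exact: perm_trans sP (perm_enum_setD1 _ _ Pt).
- case=> [|j]; first by split.
  by have [mR RLY] := mRs j; split=> // z /RLY[].
- have YRs j : Y `&` Rs j = set0.
    by apply/seteqP; split=> z // [Yz /(mRs j).2[]].
  case=> [|j] [|j'] //= jj'; [by rewrite setIC YRs | exact: dRs].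
- by case=> [|j] //; rewrite cardPt ltnS; exact: Rst.
- case=> [|j] [|j'] //=; rewrite cardPt ltnS.
    by move=> j'P; apply: Yc; exact: s_in.
  by move=> /andP[jj' j'P]; apply: Rsle; rewrite jj'.
Qed.

End MeasureFamily.

Section Refinement.
Local Set Implicit Arguments.
Local Unset Strict Implicit.
Context {d : measure_display} {T : measurableType d} {R : realType} {I J : finType}.
Variable mu : I -> {finite_measure set T -> \bar R}.
Hypothesis mu_nonatomic : forall i, non_atomic (mu i).

Local Notation m i := (measr (mu i)).

Variables (S : set T) (Q : J -> set T) (M : {set J}) (K : I -> {set J}).
Variables (a : I) (beta : R).

Local Notation n := (2 ^ #|I|.-1)%N.

Hypotheses (mQ : forall q, measurable (Q q)) (QS : forall q, Q q `<=` S).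
Hypothesis dQ : forall q q', q != q' -> Q q `&` Q q' = set0.
Hypothesis Qa : forall q, m a (Q q) = beta.
Hypothesis M_big : (n <= #|M|)%N.
Hypothesis KM : forall c q, q \in K c -> q \notin M.
Hypothesis dK : forall c c' q, c != c' -> q \in K c -> q \notin K c'.
Hypothesis K_big : forall c, c != a -> (n <= #|K c|)%N.
Hypothesis Ktop : forall c q i, c != a -> q \in K c -> i \in M -> m c (Q i) <= m c (Q q).

Definition reserve c := \big[setU/set0]_(q <- enum (K c)) Q q.

Definition reserved (L : seq I) : set T := [set x | exists2 c, c \in L & reserve c x].

Lemma reserveP c x : reserve c x <-> exists2 q, q \in K c & Q q x.
Proof.
rewrite /reserve -bigcup_seq.
by split=> -[q qK Qx]; exists q; rewrite //= ?mem_enum // -mem_enum.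
Qed.

Lemma measurable_reserve c : measurable (reserve c).
Proof. exact: bigsetU_measurable. Qed.

Lemma reserve_sub c : reserve c `<=` S.
Proof. by move=> x /reserveP[q _ /QS]. Qed.

Lemma reserve_piece_disjoint c i : i \in M -> reserve c `&` Q i = set0.
Proof.
move=> Mi; apply/seteqP; split=> x // [/reserveP[q Kq Qqx] Qix].
have qi : q != i by apply: contraTneq Kq => ->; apply/negP => /KM; rewrite Mi.
by rewrite -(dQ qi); split.
Qed.

Lemma reserve_disjoint c c' : c != c' -> reserve c `&` reserve c' = set0.
Proof.
move=> cc'; apply/seteqP; split=> x // [/reserveP[q Kq Qqx] /reserveP[q' Kq' Qq'x]].
have qq' : q != q' by apply: contraTneq Kq' => <-; exact: dK Kq.
by rewrite -(dQ qq'); split.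
Qed.

Lemma measr_reserve_ge c lc : c != a -> 0 <= lc ->
  (forall q, q \in K c -> lc <= m c (Q q)) -> n%:R * lc <= m c (reserve c).
Proof.
move=> ca lc0 lcK; rewrite /reserve measr_bigsetU ?enum_uniq // big_enum /=.
apply: le_trans (ler_sum _ lcK); rewrite sumr_const -[lc *+ _]mulr_natl.
by rewrite ler_wpM2r // ler_nat K_big.
Qed.

(* The measures in [L] (most recently served first) have been served and [p]
   are waiting.  The pool piece [i \in M] has grown to [P i] using reserves of
   served measures only; the level [lam x] of [x] bounds [x] from below on every
   pool piece and is attained exactly on the pieces [A x]. *)
Record refinement (L : seq I) (p : nat) (P : J -> set T) (lam : I -> R)
    (A : I -> {set J}) : Prop := Refinement {
  ref_uniq : uniq L;
  ref_a : a \in L;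
  ref_size : (size L + p)%N = #|I|;
  ref_meas : forall i, i \in M -> measurable (P i);
  ref_cover : forall i, i \in M -> P i `<=` Q i `|` reserved L;
  ref_disj : forall i j, i \in M -> j \in M -> i != j -> P i `&` P j = set0;
  ref_lam : forall x i, x \in L -> i \in M -> lam x <= m x (P i);
  ref_A : forall x, x \in L -> A x \subset M;
  ref_A_lam : forall x i, x \in L -> i \in A x -> m x (P i) = lam x;
  ref_card : forall k, (k < size L)%N -> (2 ^ p + k <= #|A (nth a L k)|)%N;
  ref_card_a : (2 ^ p <= #|A a|)%N;
  ref_fresh : forall i, i \in A a -> P i = Q i;
  ref_lam_a : lam a = beta }.

Lemma refinement_init : refinement [:: a] #|I|.-1 Q (fun=> beta) (fun=> M).
Proof.
split=> //.
- exact: mem_head.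
- by rewrite add1n prednK //; apply/card_gt0P; exists a.
- by move=> i j _ _; exact: dQ.
- by move=> x i; rewrite inE => /eqP-> _; rewrite Qa.
- by move=> x i; rewrite inE => /eqP-> _; rewrite Qa.
- by case=> [|//] _; rewrite addn0.
Qed.

Section Step.
Variables (L : seq I) (p : nat) (P : J -> set T) (lam : I -> R) (A : I -> {set J}).
Variable c : I.
Hypotheses (ref : refinement L p.+1 P lam A) (cL : c \notin L).

Local Notation v i := (m c (P i)).
Local Notation below lc := [set i in M | v i < lc].
Local Notation atmost lc := [set i in M | v i <= lc].

Let ca : c != a.
Proof. by apply: contraNneq cL => ->; exact: ref_a ref. Qed.

Lemma step_level : exists lc, [/\ 0 <= lc,
  (2 ^ p <= #|atmost lc|)%N,
  (#|below lc| < 2 ^ p)%N &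
  forall q, q \in K c -> lc <= m c (Q q)].
Proof.
have AaM := ref_A ref (ref_a ref).
have tM : (0 < 2 ^ p <= #|M|)%N.
  rewrite expn_gt0 /= (leq_trans _ (subset_leq_card AaM)) //.
  by apply: leq_trans (ref_card_a ref); rewrite leq_exp2l.
have [j Mj /andP[tle tlt]] := order_statistic (fun i => v i) _ _ tM.
exists (v j); split=> //; first exact/measr_ge0/(ref_meas ref).
(* Otherwise all the untouched pieces [A a] would lie below the level. *)
move=> q Kq; rewrite leNgt; apply/negP => qj.
have : A a \subset below (v j).
  apply/fintype.subsetP => i Ai; rewrite inE (fintype.subsetP AaM) //=.
  by rewrite (ref_fresh ref) // (le_lt_trans (Ktop ca Kq _)) // (fintype.subsetP AaM).
move/subset_leq_card/(leq_trans (ref_card_a ref)); rewrite expnS mul2n -addnn => le.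
by move: tlt; rewrite ltnNge => /negP; apply; apply: leq_trans le; rewrite leq_addr.
Qed.

Lemma topup_budget lc : 0 <= lc -> (#|below lc| < 2 ^ p)%N ->
  (forall q, q \in K c -> lc <= m c (Q q)) ->
  \sum_(i in below lc) (lc - v i) <= m c (reserve c).
Proof.
move=> lc0 card_lt lcK; apply: le_trans (measr_reserve_ge ca lc0 lcK).
apply: le_trans (_ : \sum_(i in below lc) lc <= _).
  apply: ler_sum => i; rewrite inE => /andP[Mi _].
  by rewrite gerDl oppr_le0 (measr_ge0 _ (ref_meas ref Mi)).
rewrite sumr_const -[lc *+ _]mulr_natl ler_wpM2r // ler_nat (leq_trans (ltnW card_lt)) //.
by rewrite leq_exp2l // -(ref_size ref) addnS leq_addl.
Qed.

Section TopUp.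
Variables (lc : R) (D : J -> set T).
Hypotheses (lc_ge0 : 0 <= lc) (atmost_big : (2 ^ p <= #|atmost lc|)%N).
Hypothesis below_small : (#|below lc| < 2 ^ p)%N.
Hypothesis mD : forall i, measurable (D i) /\ D i `<=` reserve c.
Hypothesis dD : forall i j, i != j -> D i `&` D j = set0.
Hypothesis D_below : forall i, i \in below lc -> m c (D i) = lc - v i.
Hypothesis D0 : forall i, i \notin below lc -> D i = set0.

Lemma piece_topup_disjoint i j : i \in M -> P i `&` D j = set0.
Proof.
move=> Mi; apply/seteqP; split=> x // [Pix Djx]; have Rx := (mD j).2 _ Djx.
case: (ref_cover ref Mi Pix) => [Qix|[c' c'L R'x]].
  by rewrite -(reserve_piece_disjoint c Mi); split.
have cc' : c != c' by apply: contraNneq cL => ->.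
by rewrite -(reserve_disjoint cc'); split.
Qed.

Lemma measr_topup x i : i \in M -> m x (P i `|` D i) = m x (P i) + m x (D i).
Proof.
move=> Mi; apply: measrU; [exact: (ref_meas ref Mi) | exact: (mD i).1 |].
exact: piece_topup_disjoint.
Qed.

Lemma topup_untouched i : i \in M -> lc <= v i -> P i `|` D i = P i.
Proof. by move=> Mi lcv; rewrite D0 ?setU0 // inE Mi /= -leNgt. Qed.

Lemma topup_ge i : i \in M -> lc <= m c (P i `|` D i).
Proof.
move=> Mi; have [vlc|lcv] := ltP (v i) lc; last by rewrite topup_untouched.
by rewrite measr_topup // D_below ?inE ?Mi // addrC subrK.
Qed.

Lemma topup_eq i : i \in atmost lc -> m c (P i `|` D i) = lc.
Proof.
rewrite inE => /andP[Mi vlc]; apply/eqP; rewrite eq_le topup_ge // andbT.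
have [vlt|lcv] := ltP (v i) lc; last by rewrite topup_untouched.
by rewrite measr_topup // D_below ?inE ?Mi // addrC subrK.
Qed.

Lemma refinement_topup : refinement (c :: L) p (fun i => P i `|` D i)
  (fun x => if x == c then lc else lam x)
  (fun x => if x == c then atmost lc else A x :\: below lc).
Proof.
have card_sub (B : {set J}) k : (2 ^ p.+1 + k <= #|B|)%N ->
    (2 ^ p + k.+1 <= #|B :\: below lc|)%N.
  move=> Bk; rewrite cardsD.
  have : (#|B :&: below lc| <= #|below lc|)%N by rewrite subset_leq_card ?subsetIr.
  by move: Bk below_small; rewrite expnS; lia.
have xc x : x \in L -> (x == c) = false.
  by move=> xL; apply/negbTE; apply: contraNneq cL => <-.
have kept x i : x \in L -> i \in A x :\: below lc -> P i `|` D i = P i.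
  move=> xL /setDP[iA]; have Mi := fintype.subsetP (ref_A ref xL) _ iA.
  by rewrite inE Mi /= -leNgt; exact: topup_untouched.
have ac := xc a (ref_a ref).
split.
- by rewrite /= cL (ref_uniq ref).
- by rewrite in_cons (ref_a ref) orbT.
- by rewrite /= addSnnS (ref_size ref).
- by move=> i Mi; apply: measurableU; [exact: (ref_meas ref Mi) | exact: (mD i).1].
- move=> i Mi x [/(ref_cover ref Mi)[Qx|[c' c'L Rx]]|Dx]; [by left|right|right].
    by exists c' => //; rewrite in_cons c'L orbT.
  by exists c; [exact: mem_head | exact: (mD i).2].
- move=> i j Mi Mj ij; rewrite setIUl !setIUr (ref_disj ref Mi Mj ij).
  by rewrite !piece_topup_disjoint // setIC piece_topup_disjoint // dD // !setU0.
- move=> x i; rewrite in_cons => /orP[/eqP->|xL] Mi; first by rewrite eqxx topup_ge.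
  rewrite xc // measr_topup //; apply: le_trans (ref_lam ref xL Mi) _.
  by rewrite lerDl (measr_ge0 _ (mD i).1).
- move=> x; rewrite in_cons => /orP[/eqP->|xL].
    by rewrite eqxx; apply/fintype.subsetP => i; rewrite inE => /andP[].
  by rewrite xc //; apply: fintype.subset_trans (ref_A ref xL); exact: subsetDl.
- move=> x i; rewrite in_cons => /orP[/eqP->|xL]; first by rewrite eqxx => /topup_eq.
  by rewrite xc // => iA; rewrite (kept x i) // (ref_A_lam ref xL) //; case/setDP: iA.
- case=> [_|k]; first by rewrite /= eqxx addn0.
  rewrite /= ltnS => kL; rewrite xc ?mem_nth //.
  exact: card_sub (ref_card ref kL).
- rewrite ac; apply: leq_trans (card_sub _ 0 _); first by rewrite addn1.
  by rewrite addn0 (ref_card_a ref).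
- move=> i; rewrite ac => iA; rewrite (kept a i) ?(ref_a ref) // (ref_fresh ref) //.
  by case/setDP: iA.
- by rewrite ac (ref_lam_a ref).
Qed.

End TopUp.

Lemma refinement_step : exists P' lam' A', refinement (c :: L) p P' lam' A'.
Proof.
have [lc [lc0 atmost_big below_small lcK]] := step_level.
have [|D [mD dD D_below D0]] := nonatomic_carve mu_nonatomic (measurable_reserve c) _
  (topup_budget lc0 below_small lcK).
  by move=> i; rewrite inE => /andP[_ vlc]; rewrite subr_ge0 ltW.
by do 3 eexists; exact: (refinement_topup lc0 atmost_big below_small mD dD D_below D0).
Qed.

End Step.

Lemma refinement_complete p L P lam A : refinement L p P lam A ->
  exists L' P' lam' A', refinement L' 0 P' lam' A'.
Proof.
elim: p L P lam A => [|p IHp] L P lam A ref; first by exists L, P, lam, A.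
have [c cL] : exists c, c \notin L.
  apply/existsP; rewrite -negb_forall; apply/forallP => allL.
  have : (#|I| <= size L)%N.
    apply: leq_trans (card_size L); apply: subset_leq_card.
    by apply/fintype.subsetP => x _; exact: allL.
  by rewrite -(ref_size ref); lia.
have [P' [lam' [A' ref']]] := refinement_step ref cL.
exact: IHp ref'.
Qed.

Lemma refinement_gentleman L P lam A : refinement L 0 P lam A ->
  exists F : I -> set T, [/\ forall x, measurable (F x) /\ F x `<=` S,
    forall x y, x != y -> F x `&` F y = set0,
    forall x y, m x (F x) <= m x (F y) &
    forall x, beta <= m a (F x)].
Proof.
move=> ref; have allL x : x \in L.
  apply: contraT => xL; have : (size (x :: L) <= #|I|)%N.
    by rewrite -(card_uniqP _) ?max_card //= xL (ref_uniq ref).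
  by rewrite /= -(ref_size ref) addn0 ltnn.
have [y0 _] : exists y, y \in A a.
  by apply/set0Pn; rewrite -card_gt0; exact: (ref_card_a ref).
have [|pick [pickA pick_inj]] :=
  greedy_representatives a y0 L A finset.set0 (ref_uniq ref).
  by move=> k kL; rewrite cards0 add0n; exact: (ref_card ref kL).
have {}pickA x : pick x \in A x by have /setDP[] := pickA x (allL x).
have pickM x : pick x \in M := fintype.subsetP (ref_A ref (allL x)) _ (pickA x).
exists (fun x => P (pick x)); split.
- move=> x; split; first exact: (ref_meas ref (pickM x)).
  by move=> z /(ref_cover ref (pickM x))[/QS|[c _ /reserve_sub]].
- move=> x y xy; apply: (ref_disj ref (pickM x) (pickM y)).
  by apply: contraNneq xy => /pick_inj-> //; exact: allL.
- by move=> x y; rewrite (ref_A_lam ref (allL x) (pickA x)) (ref_lam ref (allL x)).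
- by move=> x; rewrite -(ref_lam_a ref) (ref_lam ref (ref_a ref)).
Qed.

Lemma refined_partition : exists F : I -> set T,
  [/\ forall x, measurable (F x) /\ F x `<=` S,
      forall x y, x != y -> F x `&` F y = set0,
      forall x y, m x (F x) <= m x (F y) &
      forall x, beta <= m a (F x)].
Proof.
have [L [P [lam [A ref]]]] := refinement_complete refinement_init.
exact: refinement_gentleman ref.
Qed.

End Refinement.

Local Open Scope ereal_scope.

Lemma ordered_equal_shares {d : measure_display} {T : measurableType d} {R : realType}
    {r : nat} (hr : (0 < r)%N) {mu : 'I_r -> {finite_measure set T -> \bar R}}
    (hna : forall i, non_atomic (mu i)) {S : set T} (mS : measurable S) :
  exists (Rs : 'I_r -> set T) (l : {perm 'I_r}),
    (forall k, measurable (Rs k) /\ Rs k `<=` S) /\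
    (forall k k', k != k' -> Rs k `&` Rs k' = set0) /\
    (forall k, mu (l k) (Rs k) = (r%:R^-1)%:E * mu (l k) S) /\
    (forall k j : 'I_r, (k < j)%N -> mu (l j) (Rs k) <= (r%:R^-1)%:E * mu (l j) S).
Proof.
pose c i := (r%:R^-1 * measr (mu i) S)%R.
have r0 : (r%:R : R) != 0%R by rewrite pnatr_eq0 -lt0n.
have [||s [Rs [sP mRs dRs Rsc Rsle]]] :=
  sequential_shares hna (Ordinal hr) (P := [set: 'I_r]) (c := c) mS.
- by move=> i; rewrite mulr_ge0 ?invr_ge0 ?ler0n ?measr_ge0.
- by move=> i _; rewrite cardsT card_ord /c mulrA mulfV // mul1r.
have size_s : size s = r by rewrite (perm_size sP) -cardE cardsT card_ord.
have s_uniq : uniq s by rewrite (perm_uniq sP) enum_uniq.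
pose l (k : 'I_r) := nth (Ordinal hr) s k.
have l_inj : injective l.
  by move=> k k' /eqP; rewrite nth_uniq ?size_s // => /eqP/val_inj.
exists (fun k => Rs k), (perm l_inj); rewrite cardsT card_ord in Rsc Rsle.
split; first by move=> k; exact: mRs.
split; first by move=> k k' kk'; apply: dRs.
split=> [k|k j kj]; rewrite permE (measrE _ (mRs _).1) (measrE _ mS) -EFinM.
  by rewrite Rsc.
by rewrite lee_fin Rsle // kj /=.
Qed.

Lemma large_gentleman_subset {d : measure_display} {T : measurableType d} {R : realType}
    {r : nat} (hr : (0 < r)%N) {mu : 'I_r -> {finite_measure set T -> \bar R}}
    (hna : forall i, non_atomic (mu i)) {S : set T} (mS : measurable S) (a : 'I_r) :
  exists H : set T, [/\ measurable H, H `<=` S,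
    ((2%:R ^- r.-1)%R)%:E * mu a S <= mu a H &
    gentleman_solution (fun i => mu i) H].
Proof.
pose n := (2 ^ r.-1)%N; pose N := (r * n)%N.
have N0 : (0 < N)%N by rewrite muln_gt0 hr expn_gt0.
pose beta := (measr (mu a) S / N%:R)%R.
have beta0 : (0 <= beta)%R by rewrite divr_ge0 ?measr_ge0.
have [||Q [mQS dQ Qa _]] :=
  nonatomic_carve hna (i := a) (A := [set: 'I_N]) (w := fun=> beta) mS.
- by [].
- by rewrite sumr_const cardsT card_ord -mulr_natr divfK // pnatr_eq0 -lt0n.
have [|M [K [M_big KM dK K0 _]]] := disjoint_top_blocks
  (fun c q => measr (mu c) (Q q)) n (enum (predC1 a)) [set: 'I_N] (enum_uniq _).
  by rewrite -cardE cardC1 card_ord cardsT card_ord /N -mulnSr prednK // mulnC.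
have ca c : c != a -> c \in enum (predC1 a) by rewrite mem_enum.
have [|||||F [mF dF gF bF]] := refined_partition hna (M := M) (K := K)
  (fun q => (mQS q).1) (fun q => (mQS q).2) dQ (fun q => Qa q (finset.in_setT q)).
- by rewrite card_ord.
- move=> c q; case: (boolP (c \in enum (predC1 a))) => [/KM[KMc _ _]|/K0->].
    by move=> /(fintype.subsetP KMc); rewrite inE => /andP[].
  by rewrite inE.
- exact: dK.
- by move=> c /ca /KM[]; rewrite card_ord.
- by move=> c q i /ca /KM[_ _ Ktop]; exact: Ktop.
have HE := bigcup_fin_bigsetU F.
have mH : measurable (\bigcup_x F x).
  by rewrite HE; apply: bigsetU_measurable => x _; exact: (mF x).1.
exists (\bigcup_x F x); split=> //.
- by move=> z [x _ /(mF x).2].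
- rewrite (measrE _ mH) (measrE _ mS) -EFinM lee_fin HE.
  rewrite measr_bigsetU ?index_enum_uniq //; last by move=> x; exact: (mF x).1.
  apply: le_trans (ler_sum _ (fun x _ => bF x)); rewrite sumr_const card_ord.
  have r0 : (r%:R : R) != 0%R by rewrite pnatr_eq0 -lt0n.
  suff -> : (beta *+ r = 2 ^- r.-1 * measr (mu a) S)%R by [].
  rewrite /beta /N -mulr_natr natrM natrX; field.
  by rewrite r0 expf_neq0 // pnatr_eq0.
- exists F; split=> [x|]; first exact: (mF x).1.
  split=> [x y|]; first exact: dF.
  split=> // x y.
  by rewrite (measrE _ (mF x).1) (measrE _ (mF y).1) lee_fin.
Qed.

Theorem lemma10 (d : measure_display) (T : measurableType d) (R : realType)
  (r : nat) (hr : (0 < r)%N)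
  (mu : 'I_r -> {finite_measure set T -> \bar R})
  (hna : forall i, non_atomic (mu i))
  (S : set T) (mS : measurable S)
  (hS : \prod_(i < r) mu i S != 0) :
  exists (Rs : 'I_r -> set T) (l : {perm 'I_r}),
    (forall k, measurable (Rs k) /\ Rs k `<=` S) /\
    (forall k k', k != k' -> Rs k `&` Rs k' = set0) /\
    (forall k, mu (l k) (Rs k) = (r%:R^-1)%:E * mu (l k) S) /\
    (forall k j : 'I_r, (k < j)%N -> mu (l j) (Rs k) <= (r%:R^-1)%:E * mu (l j) S) /\
    exists H : set T,
      measurable H /\ H `<=` S /\
      ((2%:R ^- r.-1)%R)%:E * mu (l (Ordinal hr)) S <= mu (l (Ordinal hr)) H /\
      gentleman_solution (fun i => mu i) H.
Proof.
have [Rs [l [RsS [dRs [Rs_eq Rs_le]]]]] := ordered_equal_shares hr hna mS.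
exists Rs, l; do 4 (split=> //).
have [H [mH HS Hbig HF]] := large_gentleman_subset hr hna mS (l (Ordinal hr)).
by exists H.
Qed.
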